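(* There are absolute constants $c_1,c_2>0$ such that the following holds. Let $\gamma\ge\pi$ be a real number and $n\ge\gamma$ an integer. Then there exist a real number $g$ with $|g-\gamma|\le c_1\sqrt{\gamma\log n}$ and a $B^*[g]$ set $S\subseteq\{1,\dots,n\}$ with $|S|\ge 2\sqrt{\gamma n/\pi}-c_2\big(\gamma+(\gamma n)^{1/4}\big)$. (In the paper's notation: $g=\gamma+O(\sqrt{\gamma\log n})$ and $|S|\ge2\sqrt{\gamma n/\pi}+O(\gamma+(\gamma n)^{1/4})$.)
   Context: For real $g>0$, a set $S$ of integers is a $B^*[g]$ set if for every integer $m$ there are at most $g$ ordered pairs $(s_1,s_2)\in S\times S$ with $s_1+s_2=m$. *)

From Stdlib Require Import Reals ZArith List.
Import ListNotations.
Open Scope R_scope.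

Definition rep_count (S : list Z) (m : Z) : nat :=
  length (filter (fun p : Z * Z => Z.eqb (fst p + snd p) m) (list_prod S S)).

Definition BstarSet (g : R) (S : list Z) : Prop :=
  NoDup S /\ forall m : Z, INR (rep_count S m) <= g.

(* Two constructions, according to the size of gamma compared with log n.

   If gamma >= 9 log n, put i + 1 (i < n) into S independently with probability
   p_i = sqrt gamma * C(2k, k) / 4^k, where k = i + ceil gamma + 1.  Since
   sum_(i <= K) C(2i, i) C(2(K - i), K - i) = 4^K, the expected number of pairs of distinct
   elements of S with a given sum is at most gamma / 2.  Chernoff bounds for these counts and for |S|, with a union bound over
   the 2 n possible sums, give an outcome in which every m has at most
   gamma + O(sqrt (gamma log n)) representations, while by Wallis' inequality
   |S| >= sum_i p_i - O((gamma n)^(1/4)) >= 2 sqrt (gamma n / pi) - O(gamma + (gamma n)^(1/4)).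

   If gamma < 9 log n, let Y be about 14 gamma and S = {1 + c + 2 M y : c in C, y < Y}, where C is
   Bose's Sidon set of q = 2^k residues modulo M = q^2 - 1, with 4^k <= n / (2 Y) < 4^(k+1).
   Every m has at most 2 Y representations, 2 Y - gamma = O(gamma) = O(sqrt (gamma log n)), and
   |S| >= q Y >= 2 sqrt (gamma n / pi). *)

From Stdlib Require Import Reals ZArith List Lia Lra Bool.
From Coquelicot Require Coquelicot.
From mathcomp Require all_boot all_algebra all_fingroup all_solvable all_field.
From mathcomp Require zify ring.
Import ListNotations.
Open Scope R_scope.

(** * Bose's Sidon sets *)

Definition sidon (C : list nat) : Prop :=
  forall a b c d, In a C -> In b C -> In c C -> In d C ->
  (a + b = c + d)%nat -> (a = c /\ b = d) \/ (a = d /\ b = c).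

Module Bose.
Import all_boot all_algebra all_fingroup all_solvable all_field zify ring.
Set Implicit Arguments. Unset Strict Implicit. Unset Printing Implicit Defensive.
Import GRing.Theory.
Local Open Scope ring_scope.

Lemma frobenius2_iterD (F : comNzRingType) j (x y : F) : 2%N \in [pchar F] ->
  (x + y) ^+ (2 ^ j) = x ^+ (2 ^ j) + y ^+ (2 ^ j).
Proof.
move=> char2; elim: j => [|j IH]; first by rewrite !expr1.
by rewrite expnSr !exprM IH sqrrD (mulrn_pchar char2) addr0.
Qed.

Section BoseConstruction.

Variables (F : finFieldType) (k : nat).
Hypotheses (k_gt0 : (0 < k)%N) (cardF : #|F| = (2 ^ k * 2 ^ k)%N) (char2 : 2%N \in [pchar F]).

Let q := (2 ^ k)%N.
Let Q := (q * q).-1.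

Lemma q_ge2 : (2 <= q)%N.
Proof. by rewrite /q -(expn1 2) leq_exp2l. Qed.

Lemma q_lt_Q : (q < Q)%N.
Proof. have := q_ge2; rewrite /Q; nia. Qed.

Lemma unit_generator_exists :
  exists u : {unit F}, #[u]%g = Q /\ forall v : {unit F}, exists i, v = (u ^+ i)%g.
Proof.
have /cyclicP [u Hu] := field_unit_group_cyclic [set: {unit F}]%G.
exists u; split; first by rewrite /order -Hu card_finField_unit cardF.
by move=> v; apply/cycleP; rewrite -Hu inE.
Qed.

Variable u : {unit F}.
Hypotheses (order_u : #[u]%g = Q) (u_gen : forall v : {unit F}, exists i, v = (u ^+ i)%g).

Let theta : F := FinRing.uval u.

Lemma thetaX i : theta ^+ i = FinRing.uval (u ^+ i)%g.
Proof. by rewrite FinRing.val_unitX. Qed.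

Lemma theta_pow_inj i j : (i < Q)%N -> (j < Q)%N -> theta ^+ i = theta ^+ j -> i = j.
Proof.
move=> ltiQ ltjQ; rewrite !thetaX => /val_inj /eqP.
by rewrite eq_expg_mod_order order_u !modn_small // => /eqP.
Qed.

Lemma theta_neq0 : theta != 0.
Proof. by rewrite -unitfE; apply: (valP u). Qed.

Lemma thetaQ : theta ^+ Q = 1.
Proof. by rewrite thetaX -order_u expg_order. Qed.

Lemma theta_pow_onto y : y != 0 -> exists2 i, (i < Q)%N & theta ^+ i = y.
Proof.
move=> y_neq0; have Uy : y \is a GRing.unit by rewrite unitfE.
have [i Hi] := u_gen (FinRing.Unit Uy).
exists (i %% Q)%N; first by rewrite ltn_mod; have := q_lt_Q; lia.
by rewrite thetaX -order_u expg_mod_order -Hi.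
Qed.

Definition in_Fq (x : F) := x ^+ q == x.

Lemma in_FqD x y : in_Fq x -> in_Fq y -> in_Fq (x + y).
Proof. by rewrite /in_Fq /q frobenius2_iterD // => /eqP -> /eqP ->. Qed.

Lemma in_FqM x y : in_Fq x -> in_Fq y -> in_Fq (x * y).
Proof. by rewrite /in_Fq exprMn => /eqP -> /eqP ->. Qed.

Lemma in_FqN x : in_Fq x -> in_Fq (- x).
Proof. by rewrite (oppr_pchar2 char2). Qed.

Lemma in_FqV x : in_Fq x -> in_Fq x^-1.
Proof. by rewrite /in_Fq exprVn => /eqP ->. Qed.

Lemma in_Fq0 : in_Fq 0.
Proof. by rewrite /in_Fq expr0n; have := q_ge2; case: (q). Qed.

Lemma theta_notin_Fq : ~~ in_Fq theta.
Proof.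
apply/negP => /eqP theta_q.
have q_eq1 : q = 1%N.
  by apply: theta_pow_inj; [exact: q_lt_Q | have := q_lt_Q; lia | rewrite expr1].
by have := q_ge2; rewrite q_eq1.
Qed.

(* q distinct elements of F_q: 0 and the powers of theta ^+ (q + 1), a generator of F_q^*. *)
Definition Fq_elems := 0 :: [seq theta ^+ ((q + 1) * j) | j <- iota 0 q.-1].

Lemma Fq_elems_in_Fq x : x \in Fq_elems -> in_Fq x.
Proof.
rewrite inE => /orP [/eqP -> | /mapP [j _ ->]]; first exact: in_Fq0.
rewrite /in_Fq -exprM.
have -> : ((q + 1) * j * q = (q + 1) * j + Q * j)%N by rewrite /Q; have := q_ge2; nia.
by rewrite exprD [theta ^+ (Q * j)]exprM thetaQ expr1n mulr1.
Qed.

Lemma Fq_elems_uniq : uniq Fq_elems.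
Proof.
rewrite /= map_inj_in_uniq ?iota_uniq ?andbT.
  by apply/mapP => [[j _ /esym/eqP]]; apply/negP; apply: expf_neq0 theta_neq0.
move=> i j; rewrite !mem_iota /= => lti ltj /theta_pow_inj eq_ij; have := q_ge2 => q2.
suff: ((q + 1) * i = (q + 1) * j)%N by nia.
by apply: eq_ij; rewrite /Q; nia.
Qed.

Lemma size_Fq_elems : size Fq_elems = q.
Proof. by rewrite /= size_map size_iota; have := q_ge2; case: (q). Qed.

Definition bose_set := [seq i <- iota 0 Q | in_Fq (theta ^+ i - theta)].

Lemma bose_set_uniq : uniq bose_set.
Proof. by rewrite filter_uniq ?iota_uniq. Qed.

Lemma bose_set_lt i : i \in bose_set -> (i < Q)%N.
Proof. by rewrite mem_filter mem_iota => /andP [_ /andP [_]]. Qed.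

Lemma bose_set_size : (q <= size bose_set)%N.
Proof.
rewrite -size_Fq_elems -(size_map (fun i => theta ^+ i - theta)).
apply: uniq_leq_size; first exact: Fq_elems_uniq.
move=> x /Fq_elems_in_Fq Fx.
have theta_x_neq0 : theta + x != 0.
  apply: contraNneq theta_notin_Fq => /eqP; rewrite addr_eq0 => /eqP ->.
  exact: in_FqN.
have [i ltiQ theta_i] := theta_pow_onto theta_x_neq0.
apply/mapP; exists i; last by rewrite theta_i addrC addKr.
by rewrite mem_filter mem_iota ltiQ theta_i addrC addKr Fx.
Qed.

(* If theta^a theta^b = theta^c theta^d with theta^i = theta + x_i, x_i in F_q, then theta
   would satisfy a linear equation over F_q unless {x_a, x_b} = {x_c, x_d}. *)
Lemma bose_set_sidon a b c d :
  a \in bose_set -> b \in bose_set -> c \in bose_set -> d \in bose_set ->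
  (a + b = c + d)%N -> (a = c /\ b = d) \/ (a = d /\ b = c).
Proof.
move=> ha hb hc hd eq_sum.
have := bose_set_lt ha; have := bose_set_lt hb; have := bose_set_lt hc; have := bose_set_lt hd.
move=> ltd ltc ltb lta.
move: ha hb hc hd; rewrite !mem_filter => /andP [Fa _] /andP [Fb _] /andP [Fc _] /andP [Fd _].
set xa := theta ^+ a - theta in Fa; set xb := theta ^+ b - theta in Fb.
set xc := theta ^+ c - theta in Fc; set xd := theta ^+ d - theta in Fd.
have eq_prod : (theta + xa) * (theta + xb) = (theta + xc) * (theta + xd).
  by rewrite /xa /xb /xc /xd !(addrC theta) !addrNK -!exprD eq_sum.
have lin : theta * (xa + xb - xc - xd) = xc * xd - xa * xb.
  have -> : theta * (xa + xb - xc - xd) =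
      ((theta + xa) * (theta + xb) - (theta + xc) * (theta + xd)) + (xc * xd - xa * xb) by ring.
  by rewrite eq_prod subrr add0r.
have sum0 : xa + xb - xc - xd = 0.
  apply: contraNeq theta_notin_Fq => sum_neq0.
  have -> : theta = (xc * xd - xa * xb) / (xa + xb - xc - xd) by rewrite -lin mulfK.
  have Fnum := in_FqD (in_FqM Fc Fd) (in_FqN (in_FqM Fa Fb)).
  have Fden := in_FqD (in_FqD (in_FqD Fa Fb) (in_FqN Fc)) (in_FqN Fd).
  exact: in_FqM Fnum (in_FqV Fden).
have prod0 : xc * xd - xa * xb = 0 by rewrite -lin sum0 mulr0.
have : (xa - xc) * (xa - xd) = 0.
  have -> : (xa - xc) * (xa - xd) = xa * (xa + xb - xc - xd) + (xc * xd - xa * xb) by ring.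
  by rewrite sum0 prod0 mulr0 addr0.
have theta_inj i j : (i < Q)%N -> (j < Q)%N -> theta ^+ i - theta = theta ^+ j - theta -> i = j.
  by move=> lti ltj /(congr1 (fun z => z + theta)); rewrite !subrK; apply: theta_pow_inj.
move/eqP; rewrite mulf_eq0 !subr_eq0 => /orP [] /eqP /theta_inj eq_a.
  by left; have ac := eq_a lta ltc; split; lia.
by right; have ad := eq_a lta ltd; split; lia.
Qed.

End BoseConstruction.

Lemma mem_In (x : nat) (s : seq nat) : x \in s <-> List.In x s.
Proof.
elim: s => [|y s IH] //=; rewrite inE; split.
- by case/orP => [/eqP ->|/IH]; [left|right].
- by case => [->|/IH ->]; rewrite ?eqxx ?orbT.
Qed.

Lemma uniq_NoDup (s : seq nat) : uniq s -> List.NoDup s.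
Proof.
elim: s => [|y s IH] /=; first by constructor.
case/andP => y_notin /IH s_NoDup; constructor => //.
by move/mem_In; apply/negP.
Qed.

Lemma expn_pow m n : expn m n = Nat.pow m n.
Proof. by elim: n => [|n IH] //; rewrite expnS IH. Qed.

Lemma sidon_set_exists k : (0 < k)%coq_nat -> exists C : list nat,
  List.NoDup C /\ (Nat.pow 2 k <= length C)%coq_nat /\
  (forall c, List.In c C -> (S c < Nat.pow 4 k)%coq_nat) /\ sidon C.
Proof.
move=> /ltP k_gt0.
have [F char2 cardF] := @pPrimePowerField 2 (k + k) (erefl true) ltac:(lia).
have cardF' : #|F| = (2 ^ k * 2 ^ k)%N by rewrite cardF expnD.
have [u [order_u u_gen]] := unit_generator_exists cardF'.
exists (bose_set k u); split; first exact/uniq_NoDup/bose_set_uniq.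
split; first by apply/leP; rewrite -expn_pow; exact: (bose_set_size k_gt0 cardF' char2 order_u u_gen).
split; first by move=> c /mem_In /bose_set_lt lt_c; apply/ltP;
  rewrite -expn_pow -[4%N]/(2 * 2)%N expnMn; lia.
move=> a b c d /mem_In ha /mem_In hb /mem_In hc /mem_In hd.
exact: (bose_set_sidon k_gt0 cardF' char2 order_u).
Qed.

End Bose.

(** * Finite sums *)

Ltac case_nat_tests :=
  repeat match goal with
  | |- context [Nat.ltb ?a ?b] => destruct (Nat.ltb_spec a b)
  | |- context [Nat.leb ?a ?b] => destruct (Nat.leb_spec a b)
  | |- context [Nat.eqb ?a ?b] => destruct (Nat.eqb_spec a b)
  | |- context [Z.eqb ?a ?b] => destruct (Z.eqb_spec a b)
  end.

Definition b2R (b : bool) : R := if b then 1 else 0.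

Lemma b2R_bounds b : 0 <= b2R b <= 1.
Proof. destruct b; simpl; lra. Qed.

Fixpoint sumR (n : nat) (f : nat -> R) : R :=
  match n with O => 0 | S k => sumR k f + f k end.

Lemma sumR_ext n f g : (forall i, (i < n)%nat -> f i = g i) -> sumR n f = sumR n g.
Proof. induction n; simpl; intros H; [reflexivity|]. rewrite IHn, H; auto. Qed.

Lemma sumR_le n f g : (forall i, (i < n)%nat -> f i <= g i) -> sumR n f <= sumR n g.
Proof.
  induction n; simpl; intros H; [lra|].
  assert (f n <= g n) by auto. assert (sumR n f <= sumR n g) by auto. lra.
Qed.

Lemma sumR_plus n f g : sumR n (fun i => f i + g i) = sumR n f + sumR n g.
Proof. induction n; simpl; [lra|]. rewrite IHn; lra. Qed.

Lemma sumR_scal n c f : sumR n (fun i => c * f i) = c * sumR n f.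
Proof. induction n; simpl; [lra|]. rewrite IHn; lra. Qed.

Lemma sumR_const n c : sumR n (fun _ => c) = INR n * c.
Proof. induction n; simpl sumR; [simpl; ring|]. rewrite IHn, S_INR. ring. Qed.

Lemma sumR_zero n : sumR n (fun _ => 0) = 0.
Proof. rewrite sumR_const. ring. Qed.

Lemma sumR_nonneg n f : (forall i, (i < n)%nat -> 0 <= f i) -> 0 <= sumR n f.
Proof. intros H. rewrite <- (sumR_zero n). apply sumR_le. auto. Qed.

Lemma sumR_Sl n f : sumR (S n) f = f O + sumR n (fun i => f (S i)).
Proof. induction n; simpl in *; [lra|]. rewrite IHn. lra. Qed.

Lemma sumR_add n m f : sumR (n + m) f = sumR n f + sumR m (fun i => f (n + i)%nat).
Proof.
  induction m; simpl; [rewrite Nat.add_0_r; lra|].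
  rewrite Nat.add_succ_r; simpl. rewrite IHm; lra.
Qed.

Lemma sumR_rev n f : sumR (S n) f = sumR (S n) (fun i => f (n - i)%nat).
Proof.
  induction n.
  - reflexivity.
  - rewrite (sumR_Sl (S n) (fun i => f (S n - i)%nat)), Nat.sub_0_r.
    change (sumR (S n) f + f (S n) = f (S n) + sumR (S n) (fun i => f (n - i)%nat)).
    rewrite IHn. lra.
Qed.

Lemma sumR_le_len n m f :
  (n <= m)%nat -> (forall i, (i < m)%nat -> 0 <= f i) -> sumR n f <= sumR m f.
Proof.
  intros Hnm Hf. replace m with (n + (m - n))%nat by lia. rewrite sumR_add.
  assert (0 <= sumR (m - n) (fun i => f (n + i)%nat)); [|lra].
  apply sumR_nonneg. intros; apply Hf; lia.
Qed.

Lemma sumR_term_le n f j :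
  (forall i, (i < n)%nat -> 0 <= f i) -> (j < n)%nat -> f j <= sumR n f.
Proof.
  intros Hf Hj. replace n with (S j + (n - S j))%nat by lia. rewrite sumR_add. simpl.
  assert (0 <= sumR j f) by (apply sumR_nonneg; intros; apply Hf; lia).
  assert (0 <= sumR (n - S j) (fun i => f (S (j + i)))) by (apply sumR_nonneg; intros; apply Hf; lia).
  lra.
Qed.

Fixpoint prodR (n : nat) (f : nat -> R) : R :=
  match n with O => 1 | S k => prodR k f * f k end.

Lemma prodR_ext n f g : (forall i, (i < n)%nat -> f i = g i) -> prodR n f = prodR n g.
Proof. induction n; simpl; intros H; [reflexivity|]. rewrite IHn, H; auto. Qed.

Lemma prodR_nonneg n f : (forall i, (i < n)%nat -> 0 <= f i) -> 0 <= prodR n f.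
Proof. induction n; simpl; intros H; [lra|]. apply Rmult_le_pos; auto. Qed.

Lemma prodR_le n f g : (forall i, (i < n)%nat -> 0 <= f i <= g i) -> prodR n f <= prodR n g.
Proof.
  induction n; simpl; intros H; [lra|].
  assert (0 <= prodR n f) by (apply prodR_nonneg; intros; apply H; lia).
  assert (prodR n f <= prodR n g) by (apply IHn; intros; apply H; lia).
  destruct (H n (Nat.lt_succ_diag_r n)).
  apply Rmult_le_compat; lra.
Qed.

Lemma exp_sumR n f : exp (sumR n f) = prodR n (fun i => exp (f i)).
Proof. induction n; simpl; [apply exp_0|]. rewrite exp_plus, IHn. reflexivity. Qed.

Lemma sumR_eqb n c v : sumR n (fun j => b2R (Nat.eqb j c) * v j) = b2R (Nat.ltb c n) * v c.
Proof.
  induction n; simpl.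
  - unfold b2R; case_nat_tests; try lia; lra.
  - rewrite IHn. unfold b2R; case_nat_tests; subst; try lia; lra.
Qed.

Lemma sumR_truncate n a f : (forall i, (a <= i)%nat -> f i = 0) ->
  sumR n f = sumR a (fun i => b2R (Nat.ltb i n) * f i).
Proof.
  intros Hf. destruct (Nat.le_gt_cases n a).
  - replace a with (n + (a - n))%nat by lia. rewrite sumR_add.
    rewrite (sumR_ext (a - n) _ (fun _ => 0)), sumR_zero, Rplus_0_r.
    + apply sumR_ext. intros i Hi. unfold b2R; case_nat_tests; try lia; lra.
    + intros i Hi. unfold b2R; case_nat_tests; try lia; lra.
  - replace n with (a + (n - a))%nat by lia. rewrite sumR_add.
    rewrite (sumR_ext (n - a) _ (fun _ => 0)), sumR_zero, Rplus_0_r.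
    + apply sumR_ext. intros i Hi. unfold b2R; case_nat_tests; try lia; lra.
    + intros i Hi. apply Hf; lia.
Qed.

Fixpoint sumL {A : Type} (l : list A) (g : A -> R) : R :=
  match l with [] => 0 | x :: l' => g x + sumL l' g end.

Lemma sumL_app {A} (l1 l2 : list A) g : sumL (l1 ++ l2) g = sumL l1 g + sumL l2 g.
Proof. induction l1; simpl; [lra|]. rewrite IHl1; lra. Qed.

Lemma sumL_map {A B} (f : A -> B) l g : sumL (map f l) g = sumL l (fun x => g (f x)).
Proof. induction l; simpl; auto. rewrite IHl; auto. Qed.

Lemma sumL_ext {A} (l : list A) f g : (forall x, In x l -> f x = g x) -> sumL l f = sumL l g.
Proof. induction l; simpl; intros H; auto. rewrite H, IHl; auto. Qed.

Lemma sumL_le {A} (l : list A) f g : (forall x, In x l -> f x <= g x) -> sumL l f <= sumL l g.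
Proof.
  induction l; simpl; intros H; [lra|].
  assert (f a <= g a) by auto. assert (sumL l f <= sumL l g) by auto. lra.
Qed.

Lemma sumL_scal {A} (l : list A) c g : sumL l (fun x => c * g x) = c * sumL l g.
Proof. induction l; simpl; [lra|]. rewrite IHl; lra. Qed.

Lemma sumL_const {A} (l : list A) c : sumL l (fun _ => c) = INR (length l) * c.
Proof. induction l; simpl sumL; simpl length; [simpl; ring|]. rewrite IHl, S_INR. ring. Qed.

Lemma sumL_prod {A B} (l1 : list A) (l2 : list B) g :
  sumL (list_prod l1 l2) g = sumL l1 (fun x => sumL l2 (fun y => g (x, y))).
Proof. induction l1; simpl; auto. rewrite sumL_app, sumL_map, IHl1. reflexivity. Qed.

Lemma sumL_filter {A} (l : list A) w g : sumL (filter w l) g = sumL l (fun x => b2R (w x) * g x).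
Proof. induction l; simpl; auto. destruct (w a); simpl; rewrite IHl; lra. Qed.

Lemma sumL_seq n g : sumL (seq 0 n) g = sumR n g.
Proof.
  induction n; [reflexivity|].
  rewrite seq_S, sumL_app, IHn. simpl. lra.
Qed.

Lemma length_filter_sumL {A} (l : list A) P :
  INR (length (filter P l)) = sumL l (fun x => b2R (P x)).
Proof.
  rewrite <- (Rmult_1_r (INR _)), <- sumL_const, sumL_filter.
  apply sumL_ext; intros; lra.
Qed.

Lemma rep_count_sumL S m :
  INR (rep_count S m) = sumL S (fun a => sumL S (fun b => b2R (Z.eqb (a + b) m))).
Proof. unfold rep_count. rewrite length_filter_sumL, sumL_prod. reflexivity. Qed.

Lemma NoDup_list_prod {A B} (l1 : list A) (l2 : list B) :
  NoDup l1 -> NoDup l2 -> NoDup (list_prod l1 l2).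
Proof.
  induction 1 as [|a l1 Ha Hl1 IH]; intros H2; simpl; [constructor|].
  apply NoDup_app.
  - apply NoDup_map_NoDup_ForallPairs; auto. intros x y _ _ E. injection E; auto.
  - apply IH; auto.
  - intros [x y] Hx Hx'. apply in_map_iff in Hx. destruct Hx as [z [E _]].
    injection E; intros; subst. apply in_prod_iff in Hx'. tauto.
Qed.

Lemma exp_le_mono x y : x <= y -> exp x <= exp y.
Proof. intros [Hlt | ->]; [left; apply exp_increasing, Hlt | right; reflexivity]. Qed.

Lemma exp_lt1_neg x : exp x < 1 -> x < 0.
Proof. intros H. destruct (Rlt_le_dec x 0); auto. pose proof (exp_ineq1_le x). lra. Qed.

Lemma PI_gt3 : 3 < PI.
Proof. pose proof PI2_3_2. lra. Qed.

Lemma sqrt_le_of_le_sq a b : 0 <= a -> b <= a * a -> sqrt b <= a.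
Proof. intros Ha H. rewrite <- (sqrt_square a Ha). apply sqrt_le_1_alt, H. Qed.

Lemma le_sqrt_of_sq_le a b : 0 <= a -> a * a <= b -> a <= sqrt b.
Proof. intros Ha H. rewrite <- (sqrt_square a Ha). apply sqrt_le_1_alt, H. Qed.

Lemma sqrt_mul_square c x : 0 <= c -> 0 <= x -> c * sqrt x = sqrt (c * c * x).
Proof. intros Hc Hx. rewrite sqrt_mult, sqrt_square; nra. Qed.

Lemma mul_sqrt_le c x a : 0 <= c -> 0 <= x -> c * c * x <= a * a -> 0 <= a -> c * sqrt x <= a.
Proof. intros Hc Hx H Ha. rewrite sqrt_mul_square by auto. apply sqrt_le_of_le_sq; auto. Qed.

Lemma le_mul_sqrt c x a : 0 <= c -> 0 <= x -> a * a <= c * c * x -> 0 <= a -> a <= c * sqrt x.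
Proof. intros Hc Hx H Ha. rewrite sqrt_mul_square by auto. apply le_sqrt_of_sq_le; auto. Qed.

Lemma Rpower_quarter_sq x : 0 < x -> Rpower x (1 / 4) * Rpower x (1 / 4) = sqrt x.
Proof.
  intros Hx. rewrite <- Rpower_plus. replace (1 / 4 + 1 / 4) with (/ 2) by field.
  apply Rpower_sqrt, Hx.
Qed.

Lemma up_nat_bounds x : 0 < x -> x < INR (Z.to_nat (up x)) <= x + 1.
Proof.
  intros Hx. destruct (archimed x) as [H1 H2].
  assert (0 <= up x)%Z by (apply le_IZR; lra).
  rewrite INR_IZR_INZ, Z2Nat.id by auto. lra.
Qed.

Lemma Rpower_nonneg x y : 0 <= Rpower x y.
Proof. unfold Rpower. left. apply exp_pos. Qed.

(** * Central binomial coefficients *)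

(* cbin k = C(2k, k) / 4^k *)
Fixpoint cbin (k : nat) : R :=
  match k with O => 1 | S j => cbin j * (2 * INR j + 1) / (2 * INR j + 2) end.

Lemma cbin_S k : cbin (S k) = cbin k * (2 * INR k + 1) / (2 * INR k + 2).
Proof. reflexivity. Qed.

Lemma cbin_pos k : 0 < cbin k.
Proof.
  induction k; simpl; [lra|]. pose proof (pos_INR k).
  apply Rdiv_lt_0_compat; [apply Rmult_lt_0_compat|]; lra.
Qed.

Lemma cbin_S_mul k : (INR k + 1) * cbin (S k) = (INR k + / 2) * cbin k.
Proof. rewrite cbin_S. pose proof (pos_INR k). field. lra. Qed.

Lemma cbin_sq_le k : cbin k * cbin k * (2 * INR k + 1) <= 1.
Proof.
  induction k; [simpl; lra|].
  rewrite cbin_S, S_INR. pose proof (pos_INR k). pose proof (cbin_pos k).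
  set (c := cbin k) in *. set (x := INR k) in *.
  assert (E : c * (2 * x + 1) / (2 * x + 2) * (c * (2 * x + 1) / (2 * x + 2)) * (2 * (x + 1) + 1)
     = c * c * (2 * x + 1) * ((2 * x + 1) * (2 * x + 3) / ((2 * x + 2) * (2 * x + 2))))
    by (field; lra).
  rewrite E.
  assert ((2 * x + 1) * (2 * x + 3) / ((2 * x + 2) * (2 * x + 2)) <= 1).
  { apply Rmult_le_reg_r with ((2 * x + 2) * (2 * x + 2)); [nra|].
    unfold Rdiv. rewrite Rmult_assoc, Rinv_l; nra. }
  assert (0 <= c * c * (2 * x + 1)) by (apply Rmult_le_pos; nra).
  nra.
Qed.

Lemma cbin_sum n : sumR n cbin = 2 * INR n * cbin n.
Proof.
  induction n; simpl sumR; [simpl; lra|].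
  rewrite IHn, S_INR. pose proof (cbin_S_mul n). lra.
Qed.

Definition cbin_conv n := sumR (S n) (fun i => cbin i * cbin (n - i)).

Lemma cbin_conv_weighted n :
  2 * sumR (S n) (fun i => INR i * (cbin i * cbin (n - i))) = INR n * cbin_conv n.
Proof.
  assert (Hrev : sumR (S n) (fun i => (INR n - INR i) * (cbin i * cbin (n - i)))
               = sumR (S n) (fun i => INR i * (cbin i * cbin (n - i)))).
  { rewrite sumR_rev. apply sumR_ext. intros i Hi.
    replace (n - (n - i))%nat with i by lia. rewrite minus_INR by lia. ring. }
  unfold cbin_conv. rewrite <- (sumR_scal _ (INR n)).
  rewrite (sumR_ext _ (fun i => INR n * _)
             (fun i => (INR n - INR i) * (cbin i * cbin (n - i)) + INR i * (cbin i * cbin (n - i))))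
    by (intros; ring).
  rewrite sumR_plus, Hrev. ring.
Qed.

(* The generating function of cbin is (1 - x)^(-1/2), whose square is (1 - x)^(-1). *)
Lemma cbin_conv_eq1 n : cbin_conv n = 1.
Proof.
  induction n; [unfold cbin_conv; simpl; lra|]. rewrite <- IHn.
  assert (Hshift : 2 * sumR (S (S n)) (fun i => INR i * (cbin i * cbin (S n - i)))
                 = 2 * sumR (S n) (fun i => INR i * (cbin i * cbin (n - i))) + cbin_conv n).
  { rewrite sumR_Sl. simpl INR at 1. rewrite Rmult_0_l, Rplus_0_l.
    rewrite (sumR_ext _ _ (fun i => INR i * (cbin i * cbin (n - i)) + / 2 * (cbin i * cbin (n - i)))).
    - rewrite sumR_plus, sumR_scal. unfold cbin_conv. field.
    - intros i _. rewrite S_INR, <- Rmult_assoc, cbin_S_mul. simpl (S n - S i)%nat. ring. }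
  rewrite !cbin_conv_weighted in Hshift. rewrite S_INR in Hshift.
  pose proof (pos_INR n). apply Rmult_eq_reg_l with (INR n + 1); lra.
Qed.

Lemma cbin_conv_window_le N a m : (a + m <= S N)%nat ->
  sumR m (fun i => cbin (a + i) * cbin (N - (a + i))) <= 1.
Proof.
  intros Ham. rewrite <- (cbin_conv_eq1 N). unfold cbin_conv.
  assert (Hterm : forall j, 0 <= cbin j * cbin (N - j))
    by (intros j; pose proof (cbin_pos j); pose proof (cbin_pos (N - j)); nra).
  replace (S N) with (a + (S N - a))%nat by lia. rewrite sumR_add.
  assert (0 <= sumR a (fun j => cbin j * cbin (N - j))) by (apply sumR_nonneg; auto).
  assert (sumR m (fun i => cbin (a + i) * cbin (N - (a + i)))
          <= sumR (S N - a) (fun i => cbin (a + i) * cbin (N - (a + i))))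
    by (apply sumR_le_len; [lia | auto]).
  lra.
Qed.

Module Wallis.
Import Coquelicot.

Definition sin_pow_integral (m : nat) : R := RInt (fun x => sin x ^ m) 0 (PI / 2).

Lemma continuous_sin_pow m x : continuous (fun x => sin x ^ m) x.
Proof. apply (@ex_derive_continuous R_AbsRing R_NormedModule). auto_derive. auto. Qed.

Lemma ex_RInt_sin_pow m : ex_RInt (fun x => sin x ^ m) 0 (PI / 2).
Proof. apply (@ex_RInt_continuous R_CompleteNormedModule). intros; apply continuous_sin_pow. Qed.

Lemma sin_pow_integral0 : sin_pow_integral 0 = PI / 2.
Proof.
  unfold sin_pow_integral. simpl. rewrite (RInt_const (V := R_CompleteNormedModule)).
  unfold scal; simpl; unfold mult; simpl. ring.
Qed.

Lemma sin_pow_integral1 : sin_pow_integral 1 = 1.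
Proof.
  unfold sin_pow_integral. apply (is_RInt_unique (V := R_CompleteNormedModule)).
  replace 1 with (minus ((fun x => - cos x) (PI / 2)) ((fun x => - cos x) 0))
    by (simpl; unfold minus, plus, opp; simpl; rewrite cos_PI2, cos_0; ring).
  apply (is_RInt_derive (V := R_CompleteNormedModule) (fun x => - cos x)).
  - intros x _. auto_derive; auto. simpl. ring.
  - intros x _. apply continuous_sin_pow.
Qed.

(* Integration by parts, via the derivative of sin^(m+1) cos. *)
Lemma sin_pow_integral_rec m :
  (INR m + 2) * sin_pow_integral (m + 2) = (INR m + 1) * sin_pow_integral m.
Proof.
  set (g := fun x => sin x ^ (m + 1) * cos x).
  set (h := fun x => (INR m + 1) * sin x ^ m - (INR m + 2) * sin x ^ (m + 2)).
  assert (Hd : forall x, is_derive g x (h x)).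
  { intros x. unfold g, h. auto_derive; auto.
    replace (m + 1)%nat with (S m) by lia. replace (m + 2)%nat with (S (S m)) by lia.
    simpl pred. rewrite S_INR. pose proof (sin2_cos2 x) as Hsc. unfold Rsqr in Hsc.
    simpl. replace (1 * cos x * ((INR m + 1) * sin x ^ m) * cos x)
      with ((INR m + 1) * sin x ^ m * (cos x * cos x)) by ring.
    replace (cos x * cos x) with (1 - sin x * sin x) by lra. ring. }
  assert (Hi : RInt h 0 (PI / 2) = minus (g (PI / 2)) (g 0)).
  { apply (is_RInt_unique (V := R_CompleteNormedModule)).
    apply (is_RInt_derive (V := R_CompleteNormedModule) g); [intros; apply Hd|].
    intros x _. unfold h. apply (@ex_derive_continuous R_AbsRing R_NormedModule). auto_derive. auto. }
  assert (Hg : minus (g (PI / 2)) (g 0) = 0).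
  { unfold g, minus, plus, opp; simpl. rewrite cos_PI2, sin_0.
    replace (m + 1)%nat with (S m) by lia. simpl. ring. }
  rewrite Hg in Hi. unfold h in Hi.
  rewrite (RInt_minus (V := R_CompleteNormedModule)
             (fun x => (INR m + 1) * sin x ^ m) (fun x => (INR m + 2) * sin x ^ (m + 2))) in Hi.
  2, 3: apply (@ex_RInt_continuous R_CompleteNormedModule); intros;
        apply (@ex_derive_continuous R_AbsRing R_NormedModule); auto_derive; auto.
  rewrite (RInt_scal (V := R_CompleteNormedModule) (fun x => sin x ^ m)) in Hi
    by apply ex_RInt_sin_pow.
  rewrite (RInt_scal (V := R_CompleteNormedModule) (fun x => sin x ^ (m + 2))) in Hi
    by apply ex_RInt_sin_pow.
  unfold sin_pow_integral. unfold minus, plus, opp, scal in Hi; simpl in Hi.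
  unfold mult in Hi; simpl in Hi. lra.
Qed.

Lemma sin_pow_integral_even k : sin_pow_integral (2 * k) = PI / 2 * cbin k.
Proof.
  induction k; [simpl; rewrite sin_pow_integral0; ring|].
  replace (2 * S k)%nat with (2 * k + 2)%nat by lia.
  pose proof (sin_pow_integral_rec (2 * k)) as H.
  rewrite IHk, mult_INR in H. replace (INR 2) with 2 in H by (simpl; ring).
  rewrite cbin_S. pose proof (pos_INR k).
  apply Rmult_eq_reg_l with (2 * INR k + 2); [|lra].
  rewrite H. field. lra.
Qed.

Lemma sin_pow_integral_odd k : sin_pow_integral (2 * k + 1) * cbin k * (2 * INR k + 1) = 1.
Proof.
  induction k; [simpl; rewrite sin_pow_integral1; ring|].
  replace (2 * S k + 1)%nat with ((2 * k + 1) + 2)%nat by lia.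
  pose proof (sin_pow_integral_rec (2 * k + 1)) as H.
  rewrite plus_INR, mult_INR in H. replace (INR 2) with 2 in H by (simpl; ring).
  simpl (INR 1) in H. rewrite cbin_S, S_INR. pose proof (pos_INR k).
  replace (sin_pow_integral (2 * k + 1 + 2))
    with ((2 * INR k + 1 + 1) * sin_pow_integral (2 * k + 1) / (2 * INR k + 1 + 2))
    by (rewrite <- H; field; lra).
  transitivity (sin_pow_integral (2 * k + 1) * cbin k * (2 * INR k + 1)); [field; lra | exact IHk].
Qed.

Lemma sin_pow_integral_odd_le_even k : sin_pow_integral (2 * k + 1) <= sin_pow_integral (2 * k).
Proof.
  pose proof PI_RGT_0. unfold sin_pow_integral.
  apply RInt_le; [lra | apply ex_RInt_sin_pow | apply ex_RInt_sin_pow |].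
  intros x Hx. rewrite Nat.add_1_r. change (sin x ^ S (2 * k)) with (sin x * sin x ^ (2 * k)).
  assert (0 <= sin x) by (apply sin_ge_0; lra).
  assert (sin x <= 1) by (pose proof (SIN_bound x); lra).
  assert (0 <= sin x ^ (2 * k)) by (apply pow_le; lra).
  nra.
Qed.

(* Wallis: I (2k+1) <= I (2k), where I (2k) = pi/2 cbin k and I (2k+1) = 1 / ((2k+1) cbin k). *)
Lemma cbin_sq_ge k : 2 <= PI * (cbin k * cbin k * (2 * INR k + 1)).
Proof.
  pose proof (sin_pow_integral_odd_le_even k) as Hle.
  pose proof (sin_pow_integral_odd k) as Hodd. rewrite sin_pow_integral_even in Hle.
  pose proof (cbin_pos k). pose proof (pos_INR k). pose proof PI_RGT_0.
  set (c := cbin k * (2 * INR k + 1)) in *.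
  assert (Hc : 0 < c) by (unfold c; nra).
  apply Rmult_le_compat_r with (r := c) in Hle; [|lra].
  replace (sin_pow_integral (2 * k + 1) * c) with 1 in Hle
    by (unfold c; rewrite <- Rmult_assoc; symmetry; exact Hodd).
  unfold c in Hle. lra.
Qed.

End Wallis.

Lemma cbin_partial_sum_sq_le N : (2 * INR N * cbin N) * (2 * INR N * cbin N) <= 2 * INR N.
Proof.
  pose proof (cbin_sq_le N). pose proof (cbin_pos N). pose proof (pos_INR N).
  assert (INR N * INR N * (cbin N * cbin N) * (2 * INR N + 1) <= INR N * INR N) by nra.
  nra.
Qed.

Lemma cbin_partial_sum_ge n N : (n < N)%nat -> 2 * sqrt (INR n / PI) <= 2 * INR N * cbin N.
Proof.
  intros HnN. pose proof (Wallis.cbin_sq_ge N). pose proof (cbin_pos N). pose proof PI_RGT_0.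
  apply le_INR in HnN. rewrite S_INR in HnN. pose proof (pos_INR n).
  apply mul_sqrt_le; [lra | apply Rle_mult_inv_pos; lra | | nra].
  apply Rmult_le_reg_l with PI; [lra|].
  replace (PI * (2 * 2 * (INR n / PI))) with (4 * INR n) by (field; lra).
  set (X := PI * (cbin N * cbin N)).
  assert (HX : 2 <= X * (2 * INR N + 1)) by (unfold X; lra).
  assert (Hn : INR n * (2 * INR N + 1) <= 2 * INR N * INR N) by nra.
  assert (INR n <= INR N * INR N * X).
  { apply Rmult_le_reg_r with (2 * INR N + 1); [lra|].
    apply Rle_trans with (2 * INR N * INR N); [lra|].
    assert (0 <= INR N * INR N) by nra. nra. }
  replace (PI * (2 * INR N * cbin N * (2 * INR N * cbin N))) with (4 * (INR N * INR N * X))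
    by (unfold X; ring).
  lra.
Qed.

(** * Independent Bernoulli selections *)

Definition set_coord (w : nat -> bool) (k : nat) (b : bool) : nat -> bool :=
  fun j => if Nat.eqb j k then b else w j.

Definition depends_on (D : nat -> bool) (F : (nat -> bool) -> R) : Prop :=
  forall w w', (forall i, D i = true -> w i = w' i) -> F w = F w'.

Lemma depends_on_set_coord D F k b : depends_on D F -> depends_on D (fun w => F (set_coord w k b)).
Proof. intros H w w' Hw. apply H. intros i Hi. unfold set_coord. destruct (Nat.eqb i k); auto. Qed.

Lemma depends_on_set_coord_eq D F k b w :
  depends_on D F -> D k = false -> F (set_coord w k b) = F w.
Proof.
  intros H Hk. apply H. intros i Hi. unfold set_coord.
  destruct (Nat.eqb_spec i k); [subst; congruence | reflexivity].
Qed.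

Lemma depends_on_coord i (g : bool -> R) : depends_on (fun k => Nat.eqb k i) (fun w => g (w i)).
Proof. intros w w' Hw. rewrite (Hw i); [reflexivity | apply Nat.eqb_refl]. Qed.

Section Expectation.

Variable p : nat -> R.

(* The expectation when each coordinate i < n is true with probability p i, independently,
   and the coordinates >= n are false. *)
Fixpoint expect (n : nat) (F : (nat -> bool) -> R) : R :=
  match n with
  | O => F (fun _ => false)
  | S k => p k * expect k (fun w => F (set_coord w k true))
           + (1 - p k) * expect k (fun w => F (set_coord w k false))
  end.

Lemma expect_ext n F G : (forall w, F w = G w) -> expect n F = expect n G.
Proof.
  revert F G; induction n; intros F G H; simpl; auto.
  rewrite (IHn (fun w => F (set_coord w n true)) (fun w => G (set_coord w n true))),
          (IHn (fun w => F (set_coord w n false)) (fun w => G (set_coord w n false)));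
    auto.
Qed.

Lemma expect_const n c : expect n (fun _ => c) = c.
Proof. induction n; simpl; auto. rewrite IHn. ring. Qed.

Lemma expect_plus n F G : expect n (fun w => F w + G w) = expect n F + expect n G.
Proof.
  revert F G; induction n; intros F G; simpl; auto.
  rewrite (IHn (fun w => F (set_coord w n true))), (IHn (fun w => F (set_coord w n false))). ring.
Qed.

Lemma expect_scal n c F : expect n (fun w => c * F w) = c * expect n F.
Proof.
  revert F; induction n; intros F; simpl; auto.
  rewrite (IHn (fun w => F (set_coord w n true))), (IHn (fun w => F (set_coord w n false))). ring.
Qed.

Lemma expect_sumR n K F :
  expect n (fun w => sumR K (fun m => F m w)) = sumR K (fun m => expect n (F m)).
Proof. induction K; simpl; [apply expect_const|]. rewrite expect_plus, IHK. reflexivity. Qed.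

Lemma expect_S_indep n D F : depends_on D F -> D n = false -> expect (S n) F = expect n F.
Proof.
  intros HF Hn. simpl.
  rewrite (expect_ext n (fun w => F (set_coord w n true)) F),
          (expect_ext n (fun w => F (set_coord w n false)) F).
  - ring.
  - intros w; apply (depends_on_set_coord_eq D); auto.
  - intros w; apply (depends_on_set_coord_eq D); auto.
Qed.

Lemma expect_coord n i a b :
  (i < n)%nat -> expect n (fun w => if w i then a else b) = p i * a + (1 - p i) * b.
Proof.
  induction n; intros Hi; [lia|].
  destruct (Nat.eq_dec i n) as [-> | Hne].
  - simpl. unfold set_coord. rewrite Nat.eqb_refl, !expect_const. reflexivity.
  - rewrite (expect_S_indep n _ _ (depends_on_coord i (fun c => if c then a else b))).
    + apply IHn; lia.
    + apply Nat.eqb_neq; auto.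
Qed.

Lemma expect_mul_indep n D1 D2 F G :
  depends_on D1 F -> depends_on D2 G -> (forall i, D1 i = true -> D2 i = false) ->
  expect n (fun w => F w * G w) = expect n F * expect n G.
Proof.
  revert D1 D2 F G; induction n as [|n IH]; intros D1 D2 F G HF HG Hdisj; [reflexivity|].
  assert (Hstep : forall D1 D2 F G, depends_on D1 F -> depends_on D2 G ->
            (forall i, D1 i = true -> D2 i = false) -> D2 n = false ->
            expect (S n) (fun w => F w * G w) = expect (S n) F * expect (S n) G).
  { clear D1 D2 F G HF HG Hdisj. intros D1 D2 F G HF HG Hdisj Hn.
    rewrite (expect_S_indep n D2 G) by auto. simpl.
    rewrite (expect_ext n (fun w => F (set_coord w n true) * G (set_coord w n true))
                          (fun w => F (set_coord w n true) * G w)),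
            (expect_ext n (fun w => F (set_coord w n false) * G (set_coord w n false))
                          (fun w => F (set_coord w n false) * G w)).
    - rewrite (IH D1 D2 (fun w => F (set_coord w n true)) G),
              (IH D1 D2 (fun w => F (set_coord w n false)) G);
        auto using depends_on_set_coord.
      ring.
    - intros w. rewrite (depends_on_set_coord_eq D2 G); auto.
    - intros w. rewrite (depends_on_set_coord_eq D2 G); auto. }
  destruct (D2 n) eqn:HD2n.
  - assert (HD1n : D1 n = false) by (destruct (D1 n) eqn:E; auto; rewrite (Hdisj n E) in HD2n; easy).
    rewrite (expect_ext _ _ (fun w => G w * F w)) by (intros; ring).
    rewrite (Hstep D2 D1 G F); auto; [ring|].
    intros i Hi. destruct (D1 i) eqn:E; auto. rewrite (Hdisj i E) in Hi. easy.
  - apply (Hstep D1 D2); auto.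
Qed.

Lemma expect_prodR n H f (E : nat -> nat -> bool) :
  (forall h, depends_on (E h) (f h)) ->
  (forall h h' j, (h' < h)%nat -> E h j = true -> E h' j = false) ->
  expect n (fun w => prodR H (fun h => f h w)) = prodR H (fun h => expect n (f h)).
Proof.
  intros Hf Hdisj.
  set (D := fun h j => existsb (fun h' => E h' j) (seq 0 h)).
  assert (A : forall h, depends_on (D h) (fun w => prodR h (fun h' => f h' w)) /\
     expect n (fun w => prodR h (fun h' => f h' w)) = prodR h (fun h' => expect n (f h'))).
  { induction h as [|h [Hdep Heq]]; simpl.
    - split; [intros w w' _; reflexivity | apply expect_const].
    - assert (HD : forall j, D h j = true \/ E h j = true -> D (S h) j = true).
      { unfold D. intros j Hj. apply existsb_exists. rewrite seq_S.
        destruct Hj as [Hj | Hj].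
        - apply existsb_exists in Hj. destruct Hj as [h' [Hh' Ej]].
          exists h'. split; auto. apply in_or_app; auto.
        - exists h. split; auto. apply in_or_app. right. left. reflexivity. }
      split.
      + intros w w' Hw. f_equal.
        * apply Hdep. intros i Hi. apply Hw, HD; auto.
        * apply (Hf h). intros i Hi. apply Hw, HD; auto.
      + rewrite (expect_mul_indep n (D h) (E h)); auto; [rewrite Heq; reflexivity|].
        intros j Hj. apply existsb_exists in Hj. destruct Hj as [h' [Hh' Ej]].
        apply in_seq in Hh'. destruct (E h j) eqn:Ehj; auto.
        rewrite (Hdisj h h' j) in Ej; auto. lia. }
  apply A.
Qed.

Hypothesis p_prob : forall i, 0 <= p i <= 1.

Lemma expect_le n F G : (forall w, F w <= G w) -> expect n F <= expect n G.
Proof.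
  revert F G; induction n; intros F G H; simpl; auto.
  pose proof (IHn (fun w => F (set_coord w n true)) (fun w => G (set_coord w n true)) (fun w => H _)).
  pose proof (IHn (fun w => F (set_coord w n false)) (fun w => G (set_coord w n false)) (fun w => H _)).
  destruct (p_prob n). apply Rplus_le_compat; apply Rmult_le_compat_l; lra.
Qed.

Lemma expect_lt_exists n F c : expect n F < c -> exists w, F w < c.
Proof.
  intros H. apply Classical_Prop.NNPP. intros Hnone.
  assert (expect n (fun _ => c) <= expect n F).
  { apply expect_le. intros w. destruct (Rlt_le_dec (F w) c); eauto. exfalso; eauto. }
  rewrite expect_const in *. lra.
Qed.

End Expectation.

Lemma exp_le_inv_1m l : 0 <= l < 1 -> exp l <= / (1 - l).
Proof.
  intros H. pose proof (exp_ineq1_le (- l)). pose proof (exp_pos l).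
  rewrite exp_Ropp in H0.
  apply Rmult_le_reg_r with (1 - l); [lra|]. rewrite Rinv_l by lra.
  apply Rmult_le_reg_l with (/ exp l); [apply Rinv_0_lt_compat; lra|].
  rewrite <- Rmult_assoc, Rinv_l by lra. lra.
Qed.

Lemma exp_neg_le_quadratic l : 0 <= l -> exp (- l) <= 1 - l + 3 / 4 * (l * l).
Proof.
  intros Hl. rewrite exp_Ropp. pose proof (exp_pos l).
  assert (Hsq : (1 + l / 2) * (1 + l / 2) <= exp l).
  { replace (exp l) with (exp (l / 2) * exp (l / 2)) by (rewrite <- exp_plus; f_equal; lra).
    pose proof (exp_ineq1_le (l / 2)). apply Rmult_le_compat; lra. }
  apply Rmult_le_reg_r with (exp l); [lra|]. rewrite Rinv_l by lra.
  apply Rle_trans with ((1 - l + 3 / 4 * (l * l)) * ((1 + l / 2) * (1 + l / 2))); [nra|].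
  apply Rmult_le_compat_l; nra.
Qed.

Lemma chernoff_upper_exponent M t : 0 < M -> 0 < t ->
  exists l, 0 < l /\ (exp l - 1) * M - l * (M + t) <= - Rmin (t * t / (8 * M)) (t / 4).
Proof.
  intros HM Ht.
  destruct (Rle_dec t (2 * M)) as [Hc|Hc].
  - set (l := t / (4 * M)).
    assert (Hl : 0 < l) by (apply Rdiv_lt_0_compat; lra).
    assert (Hl2 : l <= / 2).
    { apply Rmult_le_reg_r with (4 * M); [lra|].
      unfold l, Rdiv. rewrite Rmult_assoc, Rinv_l; lra. }
    exists l. split; auto.
    assert (Hexp : exp l - 1 <= l + 2 * (l * l)).
    { apply Rle_trans with (/ (1 - l) - 1); [pose proof (exp_le_inv_1m l); lra|].
      apply Rmult_le_reg_r with (1 - l); [lra|].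
      unfold Rminus at 1. rewrite Rmult_plus_distr_r, Rinv_l by lra. nra. }
    assert (E : (l + 2 * (l * l)) * M - l * (M + t) = - (t * t / (8 * M))) by (unfold l; field; lra).
    pose proof (Rmin_l (t * t / (8 * M)) (t / 4)).
    assert ((exp l - 1) * M <= (l + 2 * (l * l)) * M) by (apply Rmult_le_compat_r; lra).
    lra.
  - exists (/ 2). split; [lra|].
    pose proof (exp_le_inv_1m (/ 2)). replace (/ (1 - / 2)) with 2 in H by field.
    pose proof (Rmin_r (t * t / (8 * M)) (t / 4)).
    assert ((exp (/ 2) - 1) * M <= 1 * M) by (apply Rmult_le_compat_r; lra).
    lra.
Qed.

Lemma chernoff_lower_exponent mu u : 0 < mu -> 0 < u ->
  exists l, 0 < l /\ l * (mu - u) - (1 - exp (- l)) * mu <= - (u * u / (3 * mu)).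
Proof.
  intros Hmu Hu. set (l := 2 * u / (3 * mu)).
  assert (Hl : 0 < l) by (apply Rdiv_lt_0_compat; lra).
  exists l. split; auto. pose proof (exp_neg_le_quadratic l ltac:(lra)).
  assert ((1 - exp (- l)) * mu >= (l - 3 / 4 * (l * l)) * mu)
    by (apply Rle_ge, Rmult_le_compat_r; lra).
  assert (E : l * (mu - u) - (l - 3 / 4 * (l * l)) * mu = - (u * u / (3 * mu)))
    by (unfold l; field; lra).
  lra.
Qed.

(** * Large gamma: a random subset of [1, n] *)

Definition good_Bstar (c1 c2 gamma : R) (n : nat) : Prop :=
  exists (g : R) (S : list Z),
    Rabs (g - gamma) <= c1 * sqrt (gamma * ln (INR n)) /\ BstarSet g S /\
    (forall s, In s S -> (1 <= s <= Z.of_nat n)%Z) /\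
    INR (length S) >= 2 * sqrt (gamma * INR n / PI) - c2 * (gamma + Rpower (gamma * INR n) (1/4)).

Lemma good_Bstar_mono c1 c2 c1' c2' gamma n : 0 <= gamma -> c1 <= c1' -> c2 <= c2' ->
  good_Bstar c1 c2 gamma n -> good_Bstar c1' c2' gamma n.
Proof.
  intros Hg H1 H2 [g [S [Hgap [HB [Hrange Hsize]]]]]. exists g, S.
  pose proof (sqrt_pos (gamma * ln (INR n))). pose proof (Rpower_nonneg (gamma * INR n) (1/4)).
  split; [|split; [exact HB | split; [exact Hrange|]]].
  - assert (c1 * sqrt (gamma * ln (INR n)) <= c1' * sqrt (gamma * ln (INR n)))
      by (apply Rmult_le_compat_r; lra).
    lra.
  - assert (c2 * (gamma + Rpower (gamma * INR n) (1/4)) <= c2' * (gamma + Rpower (gamma * INR n) (1/4)))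
      by (apply Rmult_le_compat_r; lra).
    lra.
Qed.

Definition selected (w : nat -> bool) (n : nat) : list Z :=
  map (fun i => Z.of_nat (S i)) (filter w (seq 0 n)).

Definition selected_count (n : nat) (w : nat -> bool) : R := sumR n (fun i => b2R (w i)).

Definition pair_lower (n K i : nat) : bool := andb (Nat.ltb (2 * i) K) (Nat.ltb (K - i) n).

Definition pair_count (n : nat) (w : nat -> bool) (K : nat) : R :=
  sumR n (fun i => if pair_lower n K i then b2R (w i) * b2R (w (K - i)%nat) else 0).

Lemma selected_NoDup w n : NoDup (selected w n).
Proof.
  apply NoDup_map_NoDup_ForallPairs.
  - intros x y _ _ H. lia.
  - apply NoDup_filter, seq_NoDup.
Qed.

Lemma selected_range w n s : In s (selected w n) -> (1 <= s <= Z.of_nat n)%Z.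
Proof.
  unfold selected. rewrite in_map_iff. intros [i [<- Hi]].
  rewrite filter_In, in_seq in Hi. lia.
Qed.

Lemma sumL_selected w n g :
  sumL (selected w n) g = sumR n (fun i => b2R (w i) * g (Z.of_nat (S i))).
Proof. unfold selected. rewrite sumL_map, sumL_filter, sumL_seq. reflexivity. Qed.

Lemma selected_length w n : INR (length (selected w n)) = selected_count n w.
Proof.
  rewrite <- (Rmult_1_r (INR _)), <- sumL_const, sumL_selected.
  apply sumR_ext. intros; ring.
Qed.

Lemma pair_count_nonneg n w K : 0 <= pair_count n w K.
Proof.
  apply sumR_nonneg. intros i _.
  destruct (pair_lower n K i); [apply Rmult_le_pos; apply b2R_bounds | lra].
Qed.

Lemma pair_count_large n w K : (2 * n <= K)%nat -> pair_count n w K = 0.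
Proof.
  intros H. unfold pair_count. rewrite (sumR_ext _ _ (fun _ => 0)); [apply sumR_zero|].
  intros i Hi. unfold pair_lower. case_nat_tests; simpl; try lia; auto.
Qed.

(* The ordered pairs (i, K - i) split into those with i < K - i, i = K - i and i > K - i. *)
Lemma ordered_pairs_le n w K :
  sumR n (fun i => b2R (w i) * (b2R (Nat.leb i K) * (b2R (Nat.ltb (K - i) n) * b2R (w (K - i)%nat))))
  <= 2 * pair_count n w K + 1.
Proof.
  set (g := fun i => b2R (w i) * (b2R (Nat.leb i K) * (b2R (Nat.ltb (K - i) n) * b2R (w (K - i)%nat)))).
  rewrite (sumR_ext n g (fun i => g i * b2R (Nat.ltb (2 * i) K) + g i * b2R (Nat.eqb (2 * i) K)
                                   + g i * b2R (Nat.ltb K (2 * i))))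
    by (intros; unfold b2R; case_nat_tests; try lia; lra).
  rewrite !sumR_plus.
  assert (Hlt : sumR n (fun i => g i * b2R (Nat.ltb (2 * i) K)) = pair_count n w K).
  { apply sumR_ext. intros i _. unfold g, pair_lower, b2R.
    destruct (w i), (w (K - i)%nat); case_nat_tests; simpl; try lia; lra. }
  assert (Heq : sumR n (fun i => g i * b2R (Nat.eqb (2 * i) K)) <= 1).
  { apply Rle_trans with (sumR n (fun i => b2R (Nat.eqb i (Nat.div K 2)) * 1)).
    - apply sumR_le. intros i _. unfold g.
      destruct (Nat.eqb_spec (2 * i) K) as [HK | HK].
      + replace (Nat.eqb i (K / 2)) with true
          by (symmetry; apply Nat.eqb_eq; rewrite <- HK, Nat.mul_comm, Nat.div_mul; lia).
        unfold b2R; destruct (w i), (w (K - i)%nat); case_nat_tests; lra.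
      + simpl b2R at 2. rewrite Rmult_0_r. destruct (Nat.eqb i (K / 2)); simpl; lra.
    - rewrite sumR_eqb, Rmult_1_r. apply b2R_bounds. }
  assert (Hgt : sumR n (fun i => g i * b2R (Nat.ltb K (2 * i))) = pair_count n w K).
  { rewrite (sumR_truncate n (S K)) by (intros i Hi; unfold g, b2R; case_nat_tests; try lia; lra).
    rewrite sumR_rev. unfold pair_count.
    rewrite (sumR_truncate n (S K))
      by (intros i Hi; unfold pair_lower; case_nat_tests; simpl; try lia; lra).
    apply sumR_ext. intros i Hi. unfold g, pair_lower.
    replace (K - (K - i))%nat with i by lia.
    unfold b2R; destruct (w i), (w (K - i)%nat); case_nat_tests; simpl; try lia; lra. }
  lra.
Qed.

Lemma rep_count_selected_le w n m :
  INR (rep_count (selected w n) m) <= 2 * pair_count n w (Z.to_nat (m - 2)) + 1.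
Proof.
  pose proof (pair_count_nonneg n w (Z.to_nat (m - 2))).
  rewrite rep_count_sumL, sumL_selected.
  destruct (Z_lt_le_dec m 2) as [Hm | Hm].
  - rewrite (sumR_ext _ _ (fun _ => 0)), sumR_zero; [lra|].
    intros i _. rewrite sumL_selected, (sumR_ext _ _ (fun _ => 0)), sumR_zero; [ring|].
    intros j _. unfold b2R; case_nat_tests; try lia; lra.
  - eapply Rle_trans; [right | apply ordered_pairs_le].
    apply sumR_ext. intros i _. f_equal.
    rewrite sumL_selected.
    rewrite (sumR_ext n _ (fun j => b2R (Nat.eqb j (Z.to_nat (m - 2) - i))
                                    * (b2R (Nat.leb i (Z.to_nat (m - 2))) * b2R (w j)))).
    + rewrite sumR_eqb. ring.
    + intros j _. unfold b2R. destruct (w j); case_nat_tests; try lia; lra.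
Qed.

(* Uses the convolution identity: the full sum over i <= K is at most 1, and the pairs with
   2 i < K are half of the off-diagonal ones. *)
Lemma cbin_pair_sum_le n s K :
  sumR n (fun i => if pair_lower n K i then cbin (i + s + 1) * cbin (K - i + s + 1) else 0) <= / 2.
Proof.
  set (q := fun i => cbin (i + s + 1) * cbin (K - i + s + 1)).
  assert (q_nonneg : forall i, 0 <= q i)
    by (intros; unfold q; pose proof (cbin_pos (i + s + 1)); pose proof (cbin_pos (K - i + s + 1)); nra).
  set (B := sumR (S K) (fun i => b2R (Nat.ltb (2 * i) K) * q i)).
  assert (Hle_B : sumR n (fun i => if pair_lower n K i then q i else 0) <= B).
  { rewrite (sumR_truncate n (S K))
      by (intros i Hi; unfold pair_lower; case_nat_tests; simpl; try lia; lra).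
    apply sumR_le. intros i Hi. pose proof (q_nonneg i). unfold pair_lower, b2R.
    case_nat_tests; simpl; lra. }
  assert (HB_rev : B = sumR (S K) (fun i => b2R (Nat.ltb K (2 * i)) * q i)).
  { unfold B. rewrite sumR_rev. apply sumR_ext. intros i Hi.
    unfold q. replace (K - (K - i))%nat with i by lia. unfold b2R; case_nat_tests; try lia; ring. }
  assert (HB_half : 2 * B <= sumR (S K) q).
  { replace (2 * B) with (B + B) by ring. rewrite HB_rev at 2. unfold B. rewrite <- sumR_plus.
    apply sumR_le. intros i _. pose proof (q_nonneg i). unfold b2R; case_nat_tests; try lia; lra. }
  assert (Hq_sum : sumR (S K) q <= 1).
  { rewrite (sumR_ext _ q (fun i => cbin (s + 1 + i) * cbin (K + 2 * s + 2 - (s + 1 + i))))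
      by (intros i Hi; unfold q; do 2 f_equal; lia).
    apply cbin_conv_window_le. lia. }
  apply Rle_trans with B; [exact Hle_B | lra].
Qed.

Section Moments.

Variable p : nat -> R.
Hypothesis p_prob : forall i, 0 <= p i <= 1.
Variable n : nat.

Lemma expect_b2R i : (i < n)%nat -> expect p n (fun w => b2R (w i)) = p i.
Proof. intros H. unfold b2R. rewrite expect_coord; auto. ring. Qed.

Lemma expect_exp_pair l i j : (i < n)%nat -> (j < n)%nat -> i <> j ->
  expect p n (fun w => exp (l * (b2R (w i) * b2R (w j)))) = 1 + (exp l - 1) * (p i * p j).
Proof.
  intros Hi Hj Hij.
  rewrite (expect_ext p n _ (fun w => 1 + (exp l - 1) * (b2R (w i) * b2R (w j))))
    by (intros w; unfold b2R; destruct (w i), (w j); rewrite ?Rmult_1_r, ?Rmult_0_r, ?exp_0; ring).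
  rewrite expect_plus, expect_const, expect_scal.
  rewrite (expect_mul_indep p n _ _ _ _ (depends_on_coord i b2R) (depends_on_coord j b2R)).
  - rewrite !expect_b2R; auto.
  - intros k Hk. apply Nat.eqb_eq in Hk. subst. apply Nat.eqb_neq; auto.
Qed.

(* The factors exp (l w_i w_(K - i)) over the pairs {i, K - i} involve disjoint coordinates. *)
Lemma expect_exp_pair_count l K : 0 <= l ->
  expect p n (fun w => exp (l * pair_count n w K)) <=
  exp ((exp l - 1) * sumR n (fun i => if pair_lower n K i then p i * p (K - i)%nat else 0)).
Proof.
  intros Hl.
  set (f := fun i (w : nat -> bool) =>
              if pair_lower n K i then exp (l * (b2R (w i) * b2R (w (K - i)%nat))) else 1).
  rewrite (expect_ext p n _ (fun w => prodR n (fun h => f h w))).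
  2:{ intros w. unfold pair_count. rewrite <- sumR_scal, exp_sumR. apply prodR_ext. intros h _.
      unfold f. destruct (pair_lower n K h); auto. rewrite Rmult_0_r, exp_0; auto. }
  rewrite (expect_prodR p n n f
             (fun h j => andb (pair_lower n K h) (orb (Nat.eqb j h) (Nat.eqb j (K - h))))).
  - rewrite <- sumR_scal, exp_sumR. apply prodR_le. intros i Hi.
    unfold f. destruct (pair_lower n K i) eqn:Ei.
    + unfold pair_lower in Ei. apply andb_prop in Ei. destruct Ei as [E1 E2].
      apply Nat.ltb_lt in E1. apply Nat.ltb_lt in E2.
      rewrite expect_exp_pair by lia.
      pose proof (exp_pos l). pose proof (exp_ineq1_le l). destruct (p_prob i), (p_prob (K - i)%nat).
      assert (0 <= p i * p (K - i)%nat) by nra.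
      split; [nra | apply exp_ineq1_le].
    + rewrite expect_const, Rmult_0_r, exp_0. lra.
  - intros h w w' Hw. unfold f. destruct (pair_lower n K h) eqn:Eh; auto.
    rewrite (Hw h), (Hw (K - h)%nat); try reflexivity; rewrite Nat.eqb_refl, ?orb_true_r; reflexivity.
  - intros h h' j Hh. unfold pair_lower. case_nat_tests; simpl; intros; try lia; auto.
Qed.

Lemma expect_exp_neg_selected_count l : 0 <= l ->
  expect p n (fun w => exp (- l * selected_count n w)) <= exp (- (1 - exp (- l)) * sumR n p).
Proof.
  intros Hl.
  set (f := fun i (w : nat -> bool) => exp (- l * b2R (w i))).
  rewrite (expect_ext p n _ (fun w => prodR n (fun h => f h w)))
    by (intros w; unfold selected_count; rewrite <- sumR_scal, exp_sumR; reflexivity).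
  rewrite (expect_prodR p n n f (fun h j => Nat.eqb j h)).
  - rewrite <- sumR_scal, exp_sumR. apply prodR_le. intros i Hi.
    unfold f. rewrite (expect_ext p n _ (fun w => if w i then exp (- l) else 1))
      by (intros w; unfold b2R; destruct (w i); rewrite ?Rmult_1_r, ?Rmult_0_r, ?exp_0; auto).
    rewrite expect_coord; auto. destruct (p_prob i).
    pose proof (exp_pos (- l)). pose proof (exp_le_mono (- l) 0 ltac:(lra)). rewrite exp_0 in *.
    split; [nra|]. pose proof (exp_ineq1_le (- (1 - exp (- l)) * p i)). nra.
  - intros h. apply (depends_on_coord h (fun c => exp (- l * b2R c))).
  - intros h h' j Hh. case_nat_tests; intros; try lia; auto.
Qed.

End Moments.

Section LargeGamma.

Variables (gamma : R) (n : nat).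
Hypotheses (PI_le_gamma : PI <= gamma) (gamma_le_n : gamma <= INR n)
  (log_le_gamma : 9 * ln (INR n) <= gamma).

Let L := ln (INR n).

Lemma L_gt1 : 1 < L.
Proof.
  pose proof PI_gt3. pose proof exp_le_3.
  rewrite <- (ln_exp 1). apply ln_increasing; [apply exp_pos | lra].
Qed.

Lemma sqrt_gamma_L_ge : 3 * L <= sqrt (gamma * L).
Proof. pose proof L_gt1. apply le_sqrt_of_sq_le; [lra|]. unfold L in *. nra. Qed.

Let s := Z.to_nat (up gamma).

Lemma s_bounds : gamma < INR s <= gamma + 1.
Proof. apply up_nat_bounds. pose proof PI_gt3. lra. Qed.

Lemma sqrt_gamma_sq : sqrt gamma * sqrt gamma = gamma.
Proof. apply sqrt_sqrt. pose proof PI_gt3. lra. Qed.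

Lemma sqrt_gamma_mul a b : sqrt gamma * a * (sqrt gamma * b) = gamma * (a * b).
Proof. rewrite <- sqrt_gamma_sq at 3. ring. Qed.

(* p i is about sqrt (gamma / (pi i)); the shift by s keeps it below 1, and the convolution
   identity for cbin bounds the expected number of pairs summing to K by gamma / 2. *)
Let p i := sqrt gamma * cbin (i + s + 1).

Lemma p_prob i : 0 <= p i <= 1.
Proof.
  unfold p. pose proof (cbin_pos (i + s + 1)). pose proof (sqrt_pos gamma).
  pose proof (cbin_sq_le (i + s + 1)) as Hsq. pose proof s_bounds. pose proof sqrt_gamma_sq.
  rewrite !plus_INR in Hsq. simpl (INR 1) in Hsq. pose proof (pos_INR i).
  assert (0 <= sqrt gamma * cbin (i + s + 1)) by nra.
  assert ((sqrt gamma * cbin (i + s + 1)) * (sqrt gamma * cbin (i + s + 1)) <= 1).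
  { replace ((sqrt gamma * cbin (i + s + 1)) * (sqrt gamma * cbin (i + s + 1)))
      with (gamma * (cbin (i + s + 1) * cbin (i + s + 1))) by (symmetry; apply sqrt_gamma_mul).
    nra. }
  nra.
Qed.

Lemma pair_prob_sum_le K :
  sumR n (fun i => if pair_lower n K i then p i * p (K - i)%nat else 0) <= gamma / 2.
Proof.
  pose proof (cbin_pair_sum_le n s K). pose proof PI_gt3.
  apply Rle_trans with (gamma * sumR n (fun i => if pair_lower n K i
                                 then cbin (i + s + 1) * cbin (K - i + s + 1) else 0)); [|nra].
  rewrite <- sumR_scal. right. apply sumR_ext. intros i _.
  destruct (pair_lower n K i); [apply sqrt_gamma_mul | ring].
Qed.

Let mu := sumR n p.

Lemma mu_eq :
  mu = sqrt gamma * (2 * INR (s + 1 + n) * cbin (s + 1 + n) - 2 * INR (s + 1) * cbin (s + 1)).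
Proof.
  rewrite <- !cbin_sum, sumR_add.
  replace (sumR (s + 1) cbin + sumR n (fun i => cbin (s + 1 + i)) - sumR (s + 1) cbin)
    with (sumR n (fun i => cbin (s + 1 + i))) by ring.
  unfold mu, p. rewrite <- sumR_scal. apply sumR_ext. intros. do 2 f_equal. lia.
Qed.

Lemma mu_ge : 2 * sqrt (gamma * INR n / PI) - 2 * gamma <= mu.
Proof.
  rewrite mu_eq. pose proof s_bounds. pose proof PI_gt3. pose proof (sqrt_pos gamma).
  pose proof sqrt_gamma_sq. pose proof (cbin_pos (s + 1)). pose proof (pos_INR (s + 1)).
  set (a := 2 * INR (s + 1 + n) * cbin (s + 1 + n)).
  set (b := 2 * INR (s + 1) * cbin (s + 1)).
  assert (Ha : 2 * sqrt (INR n / PI) <= a) by (apply cbin_partial_sum_ge; lia).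
  assert (Hb : b <= 2 * sqrt gamma).
  { apply Rle_trans with (sqrt (2 * INR (s + 1))).
    - apply le_sqrt_of_sq_le; [unfold b; nra | apply cbin_partial_sum_sq_le].
    - apply sqrt_le_of_le_sq; [lra|]. rewrite plus_INR. simpl (INR 1). nra. }
  replace (sqrt (gamma * INR n / PI)) with (sqrt gamma * sqrt (INR n / PI))
    by (rewrite <- sqrt_mult by (try apply Rle_mult_inv_pos; pose proof (pos_INR n); lra);
        f_equal; unfold Rdiv; ring).
  nra.
Qed.

Lemma mu_le : mu <= 3 * sqrt (gamma * INR n).
Proof.
  pose proof (mu_eq) as Hmu. pose proof s_bounds. pose proof PI_gt3. pose proof (sqrt_pos gamma).
  pose proof sqrt_gamma_sq. pose proof (cbin_pos (s + 1)). pose proof (pos_INR (s + 1)).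
  set (a := 2 * INR (s + 1 + n) * cbin (s + 1 + n)) in *.
  assert (Ha : a * a <= 2 * INR (s + 1 + n)) by apply cbin_partial_sum_sq_le.
  rewrite !plus_INR in Ha. simpl (INR 1) in Ha.
  assert (0 <= mu) by (apply sumR_nonneg; intros; apply p_prob).
  assert (0 <= 2 * INR (s + 1) * cbin (s + 1)) by nra.
  assert (mu <= sqrt gamma * a) by (rewrite Hmu; nra).
  assert (mu * mu <= gamma * (a * a))
    by (rewrite <- sqrt_gamma_mul; apply Rmult_le_compat; lra).
  apply le_mul_sqrt; nra.
Qed.

Lemma mu_pos : 0 < mu.
Proof.
  pose proof PI_gt3. assert (0 < n)%nat by (apply INR_lt; simpl; lra).
  apply Rlt_le_trans with (p 0%nat).
  - apply Rmult_lt_0_compat; [apply sqrt_lt_R0; lra | apply cbin_pos].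
  - apply sumR_term_le; [intros; apply p_prob | lia].
Qed.

Let t := 4 * sqrt (gamma * L).
Let u := 3 * Rpower (gamma * INR n) (1 / 4).

Lemma upper_tail : exists l, 0 < l /\ forall K,
  expect p n (fun w => exp (l * (pair_count n w K - (gamma / 2 + t)))) <= exp (- (3 * L)).
Proof.
  pose proof PI_gt3. pose proof L_gt1. pose proof sqrt_gamma_L_ge.
  destruct (chernoff_upper_exponent (gamma / 2) t) as [l [Hl Hexp]]; [lra | unfold t; lra |].
  exists l. split; auto. intros K.
  rewrite (expect_ext p n _ (fun w => exp (- (l * (gamma / 2 + t))) * exp (l * pair_count n w K)))
    by (intros; rewrite <- exp_plus; f_equal; ring).
  rewrite expect_scal.
  eapply Rle_trans; [apply Rmult_le_compat_l; [left; apply exp_pos |]|].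
  { apply expect_exp_pair_count; auto using p_prob; lra. }
  rewrite <- exp_plus. apply exp_le_mono.
  pose proof (pair_prob_sum_le K). pose proof (exp_ineq1_le l).
  assert (Hmin : 3 * L <= Rmin (t * t / (8 * (gamma / 2))) (t / 4)).
  { apply Rmin_glb; [|unfold t; lra].
    replace (t * t) with (16 * (sqrt (gamma * L) * sqrt (gamma * L))) by (unfold t; ring).
    rewrite sqrt_sqrt by nra.
    replace (16 * (gamma * L) / (8 * (gamma / 2))) with (4 * L) by (field; lra). lra. }
  assert ((exp l - 1) * sumR n (fun i => if pair_lower n K i then p i * p (K - i)%nat else 0)
          <= (exp l - 1) * (gamma / 2)) by (apply Rmult_le_compat_l; lra).
  lra.
Qed.

Lemma lower_tail : exists l, 0 < l /\
  expect p n (fun w => exp (- l * (selected_count n w - (mu - u)))) <= exp (- 1).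
Proof.
  pose proof PI_gt3. pose proof mu_pos. pose proof mu_le.
  assert (Hgn : 0 < gamma * INR n) by nra.
  assert (Hu : 0 < u) by (unfold u, Rpower; pose proof (exp_pos (1 / 4 * ln (gamma * INR n))); lra).
  assert (Hu2 : u * u = 9 * sqrt (gamma * INR n))
    by (unfold u; rewrite <- (Rpower_quarter_sq (gamma * INR n)) by auto; ring).
  assert (Hq : 1 <= u * u / (3 * mu)).
  { apply Rmult_le_reg_r with (3 * mu); [lra|].
    unfold Rdiv. rewrite Rmult_assoc, Rinv_l by lra. lra. }
  destruct (chernoff_lower_exponent mu u) as [l [Hl Hexp]]; auto.
  exists l. split; auto.
  rewrite (expect_ext p n _ (fun w => exp (l * (mu - u)) * exp (- l * selected_count n w)))
    by (intros; rewrite <- exp_plus; f_equal; ring).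
  rewrite expect_scal.
  eapply Rle_trans; [apply Rmult_le_compat_l; [left; apply exp_pos |]|].
  { apply expect_exp_neg_selected_count; auto using p_prob; lra. }
  rewrite <- exp_plus. apply exp_le_mono. fold mu. lra.
Qed.

(* A union bound over the 2 n upper-tail events and the lower-tail event. *)
Lemma good_outcome_exists : exists w,
  (forall K, pair_count n w K < gamma / 2 + t) /\ mu - u < selected_count n w.
Proof.
  pose proof PI_gt3. pose proof L_gt1.
  destruct upper_tail as [l [Hl Hup]]. destruct lower_tail as [l' [Hl' Hlow]].
  set (Phi := fun w => sumR (2 * n) (fun K => exp (l * (pair_count n w K - (gamma / 2 + t))))
                       + exp (- l' * (selected_count n w - (mu - u)))).
  assert (Hn3 : INR (2 * n) * exp (- (3 * L)) <= 2 / 9).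
  { rewrite mult_INR. replace (INR 2) with 2 by (simpl; ring).
    replace (- (3 * L)) with (- L + (- L + - L)) by ring. rewrite !exp_plus.
    unfold L. rewrite exp_Ropp, exp_ln by lra.
    apply Rmult_le_reg_r with (INR n * INR n); [nra|].
    replace (2 * INR n * (/ INR n * (/ INR n * / INR n)) * (INR n * INR n)) with 2 by (field; lra).
    nra. }
  assert (He : exp (- 1) <= / 2).
  { replace (- 1) with (- (1)) by ring. rewrite exp_Ropp.
    pose proof (exp_ineq1_le 1). apply Rinv_le_contravar; lra. }
  assert (HPhi : expect p n Phi < 1).
  { unfold Phi. rewrite expect_plus, expect_sumR.
    assert (sumR (2 * n) (fun K => expect p n (fun w => exp (l * (pair_count n w K - (gamma / 2 + t)))))
            <= INR (2 * n) * exp (- (3 * L)))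
      by (rewrite <- sumR_const; apply sumR_le; intros; apply Hup).
    lra. }
  destruct (expect_lt_exists p p_prob n Phi 1 HPhi) as [w Hw]. unfold Phi in Hw.
  assert (Hterms : forall K, 0 <= exp (l * (pair_count n w K - (gamma / 2 + t))))
    by (intros; left; apply exp_pos).
  pose proof (exp_pos (- l' * (selected_count n w - (mu - u)))).
  exists w. split.
  - intros K. destruct (le_lt_dec (2 * n) K) as [HK | HK].
    + rewrite pair_count_large by auto. unfold t. pose proof (sqrt_pos (gamma * L)). lra.
    + pose proof (sumR_term_le (2 * n) _ K (fun K _ => Hterms K) HK).
      assert (Hneg : l * (pair_count n w K - (gamma / 2 + t)) < 0) by (apply exp_lt1_neg; lra).
      nra.
  - assert (0 <= sumR (2 * n) (fun K => exp (l * (pair_count n w K - (gamma / 2 + t)))))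
      by (apply sumR_nonneg; auto).
    assert (Hneg : - l' * (selected_count n w - (mu - u)) < 0) by (apply exp_lt1_neg; lra).
    nra.
Qed.

Lemma large_gamma_set : good_Bstar 9 3 gamma n.
Proof.
  pose proof PI_gt3. pose proof L_gt1.
  destruct good_outcome_exists as [w [Hpairs Hsize]].
  exists (gamma + 2 * t + 1), (selected w n). split; [|split; [|split]].
  - change (ln (INR n)) with L.
    assert (1 <= sqrt (gamma * L)) by (apply le_sqrt_of_sq_le; nra).
    rewrite Rabs_right; unfold t; lra.
  - split; [apply selected_NoDup|]. intros m.
    pose proof (rep_count_selected_le w n m). pose proof (Hpairs (Z.to_nat (m - 2))). lra.
  - apply selected_range.
  - rewrite selected_length. pose proof mu_ge. unfold u in Hsize. lra.
Qed.

End LargeGamma.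

(** * Small gamma: a Sidon set plus an interval *)

Lemma sidon_rep_le C s : NoDup C -> sidon C ->
  sumL C (fun c1 => sumL C (fun c2 => b2R (Nat.eqb (c1 + c2) s))) <= 2.
Proof.
  intros HC HS.
  set (P := fun pr : nat * nat => Nat.eqb (fst pr + snd pr) s).
  replace (sumL C (fun c1 => sumL C (fun c2 => b2R (Nat.eqb (c1 + c2) s))))
    with (INR (length (filter P (list_prod C C))))
    by (rewrite length_filter_sumL, sumL_prod; reflexivity).
  assert (ND : NoDup (filter P (list_prod C C))) by (apply NoDup_filter, NoDup_list_prod; auto).
  destruct (filter P (list_prod C C)) as [|[a b] F] eqn:EF; [simpl; lra|].
  assert (Hab : In (a, b) (filter P (list_prod C C))) by (rewrite EF; left; auto).
  apply filter_In in Hab. destruct Hab as [Hab Pab]. apply in_prod_iff in Hab.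
  unfold P in Pab; simpl in Pab. apply Nat.eqb_eq in Pab.
  assert (Hincl : incl ((a, b) :: F) [(a, b); (b, a)]).
  { intros [c d] Hcd. rewrite <- EF in Hcd. apply filter_In in Hcd. destruct Hcd as [Hcd Pcd].
    apply in_prod_iff in Hcd. unfold P in Pcd; simpl in Pcd. apply Nat.eqb_eq in Pcd.
    destruct (HS c d a b) as [[-> ->] | [-> ->]]; try tauto; try lia; simpl; auto. }
  apply NoDup_incl_length, le_INR in Hincl; [|exact ND].
  simpl in Hincl |- *. lra.
Qed.

(* The elements 1 + c + 2 M y: a representation of m determines the sums c1 + c2 and y1 + y2
   as the remainder and quotient of m - 2 modulo 2 M. *)
Definition sidon_grid (M Y : nat) (C : list nat) : list Z :=
  map (fun cy => Z.of_nat (1 + fst cy + 2 * M * snd cy)) (list_prod C (seq 0 Y)).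

Section SidonGrid.

Variables (M Y : nat) (C : list nat).
Hypotheses (C_NoDup : NoDup C) (C_lt : forall c, In c C -> (c < M)%nat) (C_sidon : sidon C).

Lemma sidon_grid_NoDup : NoDup (sidon_grid M Y C).
Proof.
  apply NoDup_map_NoDup_ForallPairs; [|apply NoDup_list_prod; auto; apply seq_NoDup].
  intros [c y] [c' y'] H1 H2 E. simpl in E.
  apply in_prod_iff in H1, H2. pose proof (C_lt c (proj1 H1)). pose proof (C_lt c' (proj1 H2)).
  assert (c + 2 * M * y = c' + 2 * M * y')%nat by lia.
  destruct (Nat.lt_trichotomy y y') as [Hy | [-> | Hy]].
  - assert (2 * M * y + 2 * M <= 2 * M * y')%nat by nia. lia.
  - f_equal. lia.
  - assert (2 * M * y' + 2 * M <= 2 * M * y)%nat by nia. lia.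
Qed.

Lemma sidon_grid_range z : In z (sidon_grid M Y C) -> (1 <= z <= Z.of_nat (2 * M * Y))%Z.
Proof.
  intros Hz. apply in_map_iff in Hz. destruct Hz as [[c y] [<- Hz]].
  apply in_prod_iff in Hz. destruct Hz as [Hc Hy]. apply in_seq in Hy.
  pose proof (C_lt c Hc). simpl.
  assert (2 * M * y + 2 * M <= 2 * M * Y)%nat by nia. lia.
Qed.

Lemma sidon_grid_length : length (sidon_grid M Y C) = (length C * Y)%nat.
Proof. unfold sidon_grid. rewrite length_map, length_prod, length_seq. reflexivity. Qed.

Lemma sidon_grid_rep_le m : INR (rep_count (sidon_grid M Y C) m) <= 2 * INR Y.
Proof.
  rewrite rep_count_sumL. unfold sidon_grid. rewrite sumL_map, sumL_prod.
  set (m' := Z.to_nat (m - 2)). set (r := (m' mod (2 * M))%nat). set (d := (m' / (2 * M))%nat).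
  apply Rle_trans with
    (sumL C (fun c1 => sumL (seq 0 Y) (fun y1 => sumL C (fun c2 => b2R (Nat.eqb (c1 + c2) r))))).
  - apply sumL_le. intros c1 Hc1. apply sumL_le. intros y1 Hy1.
    rewrite sumL_map, sumL_prod. apply sumL_le. intros c2 Hc2.
    apply Rle_trans with
      (sumL (seq 0 Y) (fun y2 => b2R (Nat.eqb (c1 + c2) r) * b2R (Nat.eqb (y1 + y2) d))).
    + apply sumL_le. intros y2 _. simpl fst; simpl snd.
      destruct (Z.eqb_spec (Z.of_nat (1 + c1 + 2 * M * y1) + Z.of_nat (1 + c2 + 2 * M * y2)) m)
        as [E | E].
      * assert (E' : m' = (2 * M * (y1 + y2) + (c1 + c2))%nat) by (unfold m'; lia).
        pose proof (C_lt c1 Hc1). pose proof (C_lt c2 Hc2).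
        assert (Hr : r = (c1 + c2)%nat)
          by (unfold r; symmetry; apply (Nat.mod_unique _ _ (y1 + y2)); lia).
        assert (Hd : d = (y1 + y2)%nat)
          by (unfold d; symmetry; apply (Nat.div_unique _ _ _ (c1 + c2)); lia).
        rewrite Hr, Hd, !Nat.eqb_refl. simpl; lra.
      * simpl b2R at 1. pose proof (b2R_bounds (Nat.eqb (c1 + c2) r)).
        pose proof (b2R_bounds (Nat.eqb (y1 + y2) d)). nra.
    + rewrite sumL_scal. pose proof (b2R_bounds (Nat.eqb (c1 + c2) r)).
      assert (sumL (seq 0 Y) (fun y2 => b2R (Nat.eqb (y1 + y2) d)) <= 1).
      { rewrite sumL_seq. apply Rle_trans with (sumR Y (fun y2 => b2R (Nat.eqb y2 (d - y1)) * 1)).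
        - apply sumR_le. intros y2 _. unfold b2R; case_nat_tests; try lia; lra.
        - rewrite sumR_eqb, Rmult_1_r. apply b2R_bounds. }
      nra.
  - rewrite (sumL_ext C _ (fun c1 => INR Y * sumL C (fun c2 => b2R (Nat.eqb (c1 + c2) r))))
      by (intros c1 _; rewrite sumL_const, length_seq; reflexivity).
    rewrite sumL_scal. pose proof (sidon_rep_le C r C_NoDup C_sidon). pose proof (pos_INR Y). nra.
Qed.

End SidonGrid.

Lemma pow4_bracket X : (4 <= X)%nat -> exists k, (0 < k)%nat /\ (4 ^ k <= X < 4 ^ S k)%nat.
Proof.
  intros HX. set (j := Nat.log2 X). exists (j / 2)%nat.
  destruct (Nat.log2_spec X) as [Hj1 Hj2]; [lia|]. fold j in Hj1, Hj2.
  assert (Hj : (2 <= j)%nat) by (apply (Nat.log2_le_mono 4) in HX; exact HX).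
  pose proof (Nat.div_mod j 2 ltac:(lia)). pose proof (Nat.mod_upper_bound j 2 ltac:(lia)).
  assert (H4 : forall e, (4 ^ e = 2 ^ (2 * e))%nat) by (intros; rewrite Nat.pow_mul_r; reflexivity).
  rewrite !H4. split; [apply Nat.div_str_pos; lia|]. split.
  - apply Nat.le_trans with (2 ^ j)%nat; auto. apply Nat.pow_le_mono_r; lia.
  - apply Nat.lt_le_trans with (2 ^ S j)%nat; auto. apply Nat.pow_le_mono_r; lia.
Qed.

Section SmallGamma.

Variables (gamma : R) (n : nat).
Hypotheses (PI_le_gamma : PI <= gamma) (gamma_le_n : gamma <= INR n)
  (gamma_lt_log : gamma < 9 * ln (INR n)).

Let Y := Z.to_nat (up (14 * gamma)).

Lemma Y_bounds : 14 * gamma < INR Y <= 14 * gamma + 1.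
Proof. apply up_nat_bounds. pose proof PI_gt3. lra. Qed.

Lemma gamma_le_sqrt_gamma_log : gamma <= 3 * sqrt (gamma * ln (INR n)).
Proof. pose proof PI_gt3. apply le_mul_sqrt; nra. Qed.

Let X := (n / (2 * Y))%nat.

Lemma X_bounds : (2 * Y * X <= n < 2 * Y * (X + 1))%nat.
Proof.
  assert (0 < Y)%nat by (apply INR_lt; pose proof Y_bounds; pose proof PI_gt3; simpl; lra).
  pose proof (Nat.div_mod n (2 * Y) ltac:(lia)). pose proof (Nat.mod_upper_bound n (2 * Y) ltac:(lia)).
  unfold X. lia.
Qed.

Lemma few_blocks_set : (X < 4)%nat -> good_Bstar 84 14 gamma n.
Proof.
  intros HX. pose proof PI_gt3. pose proof Y_bounds. pose proof X_bounds.
  pose proof (Rpower_nonneg (gamma * INR n) (1/4)). pose proof (sqrt_pos (gamma * ln (INR n))).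
  exists gamma, []. split; [|split; [|split]].
  - rewrite Rminus_diag, Rabs_R0. lra.
  - split; [constructor | intros m; unfold rep_count; simpl; lra].
  - intros s [].
  - assert (Hn : INR n < 8 * INR Y).
    { assert (Hnat : (n < Y * 8)%nat) by nia. apply lt_INR in Hnat. rewrite mult_INR in Hnat.
      simpl in Hnat. lra. }
    assert (2 * sqrt (gamma * INR n / PI) <= 14 * gamma).
    { apply mul_sqrt_le; [lra | apply Rle_mult_inv_pos; nra | | lra].
      apply Rmult_le_reg_r with PI; [lra|].
      replace (2 * 2 * (gamma * INR n / PI) * PI) with (4 * gamma * INR n) by (field; lra).
      nra. }
    simpl. lra.
Qed.

Lemma grid_size_ge k : (X < 4 ^ S k)%nat -> 2 * sqrt (gamma * INR n / PI) <= INR (2 ^ k) * INR Y.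
Proof.
  intros HXk. pose proof PI_gt3. pose proof Y_bounds. pose proof X_bounds.
  assert (Hn : (n < 8 * Y * (2 ^ k * 2 ^ k))%nat).
  { rewrite <- Nat.pow_mul_l. change (2 * 2)%nat with 4%nat. rewrite Nat.pow_succ_r' in HXk.
    apply Nat.lt_le_trans with (2 * Y * (X + 1))%nat; [lia|].
    replace (8 * Y * 4 ^ k)%nat with (2 * Y * (4 * 4 ^ k))%nat by ring.
    apply Nat.mul_le_mono_l. lia. }
  apply lt_INR in Hn. rewrite !mult_INR in Hn. simpl (INR 8) in Hn.
  pose proof (pos_INR (2 ^ k)). pose proof (pos_INR n). set (r := INR (2 ^ k)) in *.
  apply mul_sqrt_le; [lra | apply Rle_mult_inv_pos; nra | | nra].
  apply Rmult_le_reg_r with PI; [lra|].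
  replace (2 * 2 * (gamma * INR n / PI) * PI) with (4 * gamma * INR n) by (field; lra).
  assert (0 <= INR Y * (r * r)) by (apply Rmult_le_pos; nra).
  assert (4 * gamma * INR n <= 32 * gamma * (INR Y * (r * r))) by nra.
  assert (32 * gamma * (INR Y * (r * r)) <= PI * INR Y * (INR Y * (r * r)))
    by (apply Rmult_le_compat_r; nra).
  lra.
Qed.

Lemma many_blocks_set : (4 <= X)%nat -> good_Bstar 84 14 gamma n.
Proof.
  intros HX. pose proof PI_gt3. pose proof Y_bounds. pose proof X_bounds.
  pose proof gamma_le_sqrt_gamma_log.
  destruct (pow4_bracket X HX) as [k [Hk [HkX HXk]]].
  destruct (Bose.sidon_set_exists Hk) as [C [HC [HCsize [HClt HCsidon]]]].
  set (M := (4 ^ k - 1)%nat).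
  assert (HCM : forall c, In c C -> (c < M)%nat) by (intros c Hc; specialize (HClt c Hc); unfold M; lia).
  exists (2 * INR Y), (sidon_grid M Y C). split; [|split; [|split]].
  - rewrite Rabs_right; lra.
  - split; [apply sidon_grid_NoDup | intros m; apply sidon_grid_rep_le]; auto.
  - intros z Hz. apply (sidon_grid_range M Y C HCM) in Hz.
    assert (2 * M * Y <= n)%nat by (unfold M; nia). lia.
  - rewrite sidon_grid_length, mult_INR. apply le_INR in HCsize.
    pose proof (grid_size_ge k HXk). pose proof (pos_INR Y).
    assert (INR (2 ^ k) * INR Y <= INR (length C) * INR Y) by (apply Rmult_le_compat_r; lra).
    pose proof (Rpower_nonneg (gamma * INR n) (1/4)). lra.
Qed.

Lemma small_gamma_set : good_Bstar 84 14 gamma n.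
Proof.
  destruct (Nat.lt_ge_cases X 4); [apply few_blocks_set | apply many_blocks_set]; auto.
Qed.

End SmallGamma.

Theorem proposition3p8 :
  exists c1 c2 : R, 0 < c1 /\ 0 < c2 /\
    forall (gamma : R) (n : nat),
      PI <= gamma -> gamma <= INR n ->
      exists (g : R) (S : list Z),
        Rabs (g - gamma) <= c1 * sqrt (gamma * ln (INR n)) /\
        BstarSet g S /\
        (forall s, In s S -> (1 <= s <= Z.of_nat n)%Z) /\
        INR (length S) >= 2 * sqrt (gamma * INR n / PI)
                          - c2 * (gamma + Rpower (gamma * INR n) (1/4)).
Proof.
  exists 84, 14. split; [lra|]. split; [lra|].
  intros gamma n Hgamma Hn. pose proof PI_gt3.
  destruct (Rle_lt_dec (9 * ln (INR n)) gamma).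
  - apply (good_Bstar_mono 9 3); try lra. apply large_gamma_set; auto.
  - apply small_gamma_set; auto.
Qed.
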